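(* Let $\varepsilon>0$, $\delta\in(0,1)$, $\Delta>0$, and let $v$ be a real-valued function on datasets with sensitivity $\Delta$, i.e. $|v(D)-v(D')|\le\Delta$ for all neighboring datasets $D,D'$. Let $h:=\delta/(1+e^{\varepsilon})$ and let $q_h$ denote the absolute value of the $h$-quantile of the Laplace distribution $\mathrm{Lap}(\Delta/\varepsilon)$. Set $\tau:=q_h$. Consider the PositiveLaplaceMechanism which, on dataset $D$, samples $\eta\sim\mathrm{Lap}(\Delta/\varepsilon)$, sets $\tilde v:=v(D)+\tau+\eta$, and outputs $\max(v(D),\tilde v)$. Then this mechanism is $(\varepsilon,\delta)$-differentially private.
   Context: $\mathrm{Lap}(b)$ is the Laplace distribution with mean $0$ and scale $b$, with density $\frac{1}{2b}e^{-|x|/b}$. The $\phi$-quantile of a distribution is the value $x$ with $\Pr[X\le x]=\phi$. Two datasets are neighboring if they differ by replacing the contribution of one individual. A randomized algorithm $M$ is $(\varepsilon,\delta)$-differentially private if for every pair of neighboring datasets $D,D'$ and every measurable set $S$, $\Pr[M(D)\in S]\le e^{\varepsilon}\Pr[M(D')\in S]+\delta$ and symmetrically with $D,D'$ swapped. *)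

From HB Require Import structures.
From mathcomp Require Import all_boot all_order all_algebra.
From mathcomp Require Import all_classical all_reals all_analysis.
Set Implicit Arguments. Unset Strict Implicit. Unset Printing Implicit Defensive.
Import Order.TTheory GRing.Theory Num.Theory.
Local Open Scope classical_set_scope.
Local Open Scope ring_scope.

Definition laplace_pdf (R : realType) (b : R) (x : R) : R :=
  (2 * b)^-1 * expR (- `|x| / b).

Definition laplace_cdf (R : realType) (b : R) (x : R) : \bar R :=
  (\int[@lebesgue_measure R]_(t in `]-oo, x]) (laplace_pdf b t)%:E)%E.

Definition pos_laplace_prob (R : realType) (Dataset : Type) (v : Dataset -> R)
  (b tau : R) (D : Dataset) (S : set R) : \bar R :=
  (\int[@lebesgue_measure R]_(eta in setT)
     ((\1_S (Num.max (v D) (v D + tau + eta)) : R)%:E * (laplace_pdf b eta)%:E))%E.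

Definition is_DP (R : realType) (Dataset : Type) (neighbor : Dataset -> Dataset -> Prop)
  (P : Dataset -> set R -> \bar R) (eps delta : R) : Prop :=
  forall D D' : Dataset, neighbor D D' ->
  forall S : set R, measurable S ->
    (P D S <= (expR eps)%:E * P D' S + delta%:E)%E /\
    (P D' S <= (expR eps)%:E * P D S + delta%:E)%E.

From HB Require Import structures.
From mathcomp Require Import all_boot all_order all_algebra.
From mathcomp Require Import all_classical all_reals all_analysis.
From mathcomp Require Import measurable_realfun ring lra.
Import Order.TTheory GRing.Theory Num.Theory.
Local Open Scope classical_set_scope.
Local Open Scope ring_scope.

(* Write the output as max(a, a + tau + eta) with a = v(D).  Off the tail event
   {eta <= -tau} the maximum is a + tau + eta > a, so Pr[M(D) in S] is at most
   Pr[a + tau + eta in S /\ a + tau + eta > a] plus the tail mass.  Replacing a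
   by a neighbouring a' is a translation of eta, which the Laplace density
   tolerates at a multiplicative cost e^(|a - a'|/b) <= e^eps; the translated
   event is contained in {M(D') in S} up to the tail again.  The tail mass is
   the Laplace CDF at -tau = -|q_h| <= q_h, hence at most h, and
   e^eps (P + h) + h = e^eps P + delta. *)

Section translation_invariance.
Context {R : realType}.
Local Notation mu := (@lebesgue_measure R).

Definition translate (c : R) : measurableTypeR R -> measurableTypeR R :=
  fun x => x + c.

Lemma measurable_translate c : measurable_fun setT (translate c).
Proof. exact: measurable_funD. Qed.

HB.instance Definition _ c :=
  isMeasurableFun.Build _ _ _ _ (translate c) (measurable_translate c).

Lemma lebesgue_measure_translate c (A : set R) : measurable A ->
  mu (translate c @^-1` A) = mu A.
Proof.
move=> mA.
apply/esym/(@lebesgue_measure_unique _ (pushforward mu (translate c))) => //=.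
move=> _ [[a b]] _ <-; rewrite /pushforward.
have -> : translate c @^-1` `]a, b]%classic = `](a - c), (b - c)]%classic.
  by apply/seteqP; split => x /=; rewrite !in_itv /= ltrBlDr lerBrDr.
rewrite !lebesgue_measure_itv/= !lte_fin ltrD2r.
by case: ifP => // _; rewrite -EFinD; congr EFin; ring.
Qed.

Lemma ge0_integral_translate (c : R) (f : R -> \bar R) :
  measurable_fun setT f -> (forall x, (0 <= f x)%E) ->
  (\int[mu]_x f (x + c)%R = \int[mu]_x f x)%E.
Proof.
move=> mf f0.
have -> : (\int[mu]_x f (x + c)%R =
           \int[mu]_(x in translate c @^-1` setT) (f \o translate c) x)%E by [].
rewrite -(ge0_integral_pushforward (measurable_translate c)) //.
by apply: (eq_measure_integral mu) => A mA _; exact: lebesgue_measure_translate.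
Qed.

End translation_invariance.

Section max_indicator.
Context {R : realDomainType}.
Variables (S : set R) (a tau x : R).

Let indic_tail : x <= - tau -> \1_(`]-oo, - tau]) x = 1 :> R.
Proof. by move=> xt; rewrite indicE mem_set //= in_itv /= xt. Qed.

Let max_above : - tau < x -> Num.max a (a + tau + x) = a + tau + x.
Proof. by move=> xt; rewrite max_r //; lra. Qed.

Lemma indic_max_le_above :
  \1_S (Num.max a (a + tau + x)) <=
  \1_(S `&` `]a, +oo[) (a + tau + x) + \1_(`]-oo, - tau]) x :> R.
Proof.
have [xt|xt] := leP x (- tau).
  by rewrite indic_tail // -[leLHS]add0r lerD.
rewrite max_above // indicI /= [\1_(`]a, +oo[) _]indicE mem_set /=.
  by rewrite mulr1 lerDl.
by rewrite in_itv /= andbT; lra.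
Qed.

Lemma indic_le_max (B : set R) : B `<=` S ->
  \1_B (a + tau + x) <=
  \1_S (Num.max a (a + tau + x)) + \1_(`]-oo, - tau]) x :> R.
Proof.
move=> BS; have [xt|xt] := leP x (- tau).
  by rewrite indic_tail // -[leLHS]add0r lerD.
rewrite max_above // -[leLHS]addr0 lerD //.
rewrite !indicE; case: (boolP (_ \in B)) => // /set_mem /BS yS.
by rewrite mem_set.
Qed.

End max_indicator.

Section max_mechanism.
Context {R : realType}.
Local Notation mu := (@lebesgue_measure R).
Variables (f : R -> R) (tau : R).
Hypotheses (f_ge0 : forall x, 0 <= f x) (mf : measurable_fun setT f).

Definition max_shift_prob (a : R) (S : set R) : \bar R :=
  (\int[mu]_(x in setT) ((\1_S (Num.max a (a + tau + x)) : R)%:E * (f x)%:E))%E.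

Definition lower_tail : \bar R :=
  (\int[mu]_(x in `]-oo, (- tau)%R]) (f x)%:E)%E.

Local Notation I := `]-oo, - tau]%classic.

(* As a [Let], this sits in the proof context, where [//] finds it for the
   nonnegativity side conditions of the integral lemmas below. *)
Let weighted_ge0 (A : set R) (y x : R) :
  (0 <= (\1_A y : R)%:E * (f x)%:E)%E.
Proof. by rewrite -EFinM lee_fin mulr_ge0. Qed.

Let measurable_weighted {A : set R} {phi : R -> R} :
  measurable A -> measurable_fun setT phi ->
  measurable_fun setT (fun x => ((\1_A (phi x) : R)%:E * (f x)%:E)%E).
Proof.
move=> mA mphi; apply: emeasurable_funM; apply/measurable_EFinP => //.
exact: measurableT_comp (measurable_indic mA) mphi.
Qed.

Let measurable_offset (s : R) : measurable_fun setT (fun x : R => s + x).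
Proof. exact: measurable_funD. Qed.

Lemma max_shift_prob_ge0 a S : (0 <= max_shift_prob a S)%E.
Proof. exact: integral_ge0. Qed.

Lemma lower_tailE :
  lower_tail = (\int[mu]_x ((\1_I x : R)%:E * (f x)%:E))%E.
Proof.
rewrite /lower_tail integral_mkcond epatch_indic.
by apply: eq_integral => x _; rewrite muleC.
Qed.

Lemma lower_tail_ge0 : (0 <= lower_tail)%E.
Proof. by rewrite lower_tailE; exact: integral_ge0. Qed.

Let weighted_le (A A' A'' : set R) (y y' : R) x :
  (\1_A y <= \1_A' y' + \1_A'' x :> R) ->
  ((\1_A y : R)%:E * (f x)%:E <=
   (\1_A' y' : R)%:E * (f x)%:E + (\1_A'' x : R)%:E * (f x)%:E)%E.
Proof. by move=> le1; rewrite -!EFinM -EFinD lee_fin -mulrDl ler_wpM2r. Qed.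

Lemma max_shift_prob_le_above a S : measurable S ->
  (max_shift_prob a S <=
   \int[mu]_x ((\1_(S `&` `]a, +oo[) (a + tau + x) : R)%:E * (f x)%:E)
   + lower_tail)%E.
Proof.
move=> mS; have mI : measurable I by exact: measurable_itv.
have mSa : measurable (S `&` `]a, +oo[).
  by apply: measurableI => //; exact: measurable_itv.
have mw := measurable_weighted mSa (measurable_offset (a + tau)).
have mwI := measurable_weighted mI (@measurable_id _ _ setT).
rewrite lower_tailE -(ge0_integralD mu measurableT _ mw _ mwI) //.
apply: ge0_le_integral => //.
- by apply: measurable_weighted => //; exact: measurable_maxr.
- exact: emeasurable_funD.
- by move=> x _; exact: weighted_le (indic_max_le_above _ _ _ _).
Qed.

Lemma le_max_shift_prob a (B S : set R) : measurable B -> measurable S ->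
  B `<=` S ->
  (\int[mu]_x ((\1_B (a + tau + x) : R)%:E * (f x)%:E) <=
   max_shift_prob a S + lower_tail)%E.
Proof.
move=> mB mS BS; have mI : measurable I by exact: measurable_itv.
have mw := measurable_weighted mS
  (measurable_maxr (measurable_cst a) (measurable_offset (a + tau))).
have mwI := measurable_weighted mI (@measurable_id _ _ setT).
rewrite lower_tailE -(ge0_integralD mu measurableT _ mw _ mwI) //.
apply: ge0_le_integral => //.
- exact: measurable_weighted.
- exact: emeasurable_funD.
- by move=> x _; exact: weighted_le (@indic_le_max _ S a tau x B BS).
Qed.

Lemma weighted_translate_le a a' c (B : set R) : measurable B ->
  (forall x, f (x + (a' - a)) <= expR c * f x) ->
  (\int[mu]_x ((\1_B (a + tau + x) : R)%:E * (f x)%:E) <=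
   (expR c)%:E * \int[mu]_x ((\1_B (a' + tau + x) : R)%:E * (f x)%:E))%E.
Proof.
move=> mB f_shift.
have mw a0 := measurable_weighted mB (measurable_offset (a0 + tau)).
rewrite -(ge0_integral_translate (a' - a) _ (mw a)) //.
rewrite -ge0_integralZl_EFin //; last exact: mw.
apply: ge0_le_integral => //.
- exact: measurableT_comp (mw a) (measurable_translate (a' - a)).
- by apply: emeasurable_funM => //; exact: mw.
move=> x _; have -> : a + tau + (x + (a' - a)) = a' + tau + x by ring.
by rewrite -!EFinM lee_fin mulrCA ler_wpM2l.
Qed.

Lemma max_shift_prob_le a a' c S : measurable S ->
  (forall x, f (x + (a' - a)) <= expR c * f x) ->
  (max_shift_prob a S <=
   (expR c)%:E * (max_shift_prob a' S + lower_tail) + lower_tail)%E.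
Proof.
move=> mS f_shift.
have mSa : measurable (S `&` `]a, +oo[).
  by apply: measurableI => //; exact: measurable_itv.
apply: le_trans (max_shift_prob_le_above a S mS) _; apply: leeD2r.
apply: le_trans (weighted_translate_le _ _ _ _ mSa f_shift) _.
by apply: lee_wpmul2l; [rewrite lee_fin expR_ge0 | exact: le_max_shift_prob].
Qed.

End max_mechanism.

Section laplace.
Context {R : realType}.
Variable b : R.
Hypothesis b_gt0 : 0 < b.

Lemma laplace_pdf_ge0 x : 0 <= laplace_pdf b x.
Proof. by rewrite mulr_ge0 ?expR_ge0 // invr_ge0 mulr_ge0 ?(ltW b_gt0). Qed.

Lemma measurable_laplace_pdf : measurable_fun setT (laplace_pdf b).
Proof.
apply: measurable_funM => //; apply: measurableT_comp => //.
apply: measurable_funM => //; apply: measurable_funN.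
exact: normr_measurable.
Qed.

Lemma laplace_pdf_translate_le x d :
  laplace_pdf b (x + d) <= expR (`|d| / b) * laplace_pdf b x.
Proof.
rewrite /laplace_pdf mulrCA ler_wpM2l ?invr_ge0 ?mulr_ge0 ?(ltW b_gt0) //.
rewrite -expRD ler_expR -mulrDl ler_pM2r ?invr_gt0 //.
by have := ler_normD (x + d) (- d); rewrite addrK normrN; lra.
Qed.

Lemma le_laplace_cdf x y : x <= y -> (laplace_cdf b x <= laplace_cdf b y)%E.
Proof.
move=> xy; apply: ge0_subset_integral => //; try exact: measurable_itv.
- apply/measurable_EFinP/measurable_funTS; exact: measurable_laplace_pdf.
- by move=> t _; rewrite lee_fin laplace_pdf_ge0.
- by move=> t /=; rewrite !in_itv /= => /le_trans; apply.
Qed.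

Lemma laplace_max_shift_prob_le tau a a' (S : set R) : measurable S ->
  (max_shift_prob (laplace_pdf b) tau a S <=
   (expR (`|a' - a| / b))%:E *
     (max_shift_prob (laplace_pdf b) tau a' S + laplace_cdf b (- tau))
   + laplace_cdf b (- tau))%E.
Proof.
move=> mS; apply: max_shift_prob_le => //.
- exact: laplace_pdf_ge0.
- exact: measurable_laplace_pdf.
- by move=> x; exact: laplace_pdf_translate_le.
Qed.

End laplace.

Lemma privacy_budget_le {R : realType} {P P' H : \bar R} {c eps h : R} :
  (P <= (expR c)%:E * (P' + H) + H)%E ->
  (0 <= P')%E -> (0 <= H)%E -> (H <= h%:E)%E -> c <= eps ->
  (P <= (expR eps)%:E * P' + (expR eps * h + h)%:E)%E.
Proof.
move=> /le_trans PP' P'0 H0 Hh ce; apply: PP'.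
have h0 : 0 <= h by rewrite -lee_fin (le_trans H0).
apply: (@le_trans _ _ ((expR eps)%:E * (P' + h%:E) + h%:E)%E).
  apply: leeD => //; apply: lee_pmul; last exact: leeD2l.
  - by rewrite lee_fin expR_ge0.
  - exact: adde_ge0.
  - by rewrite lee_fin ler_expR.
by rewrite ge0_muleDr ?lee_fin ?expR_ge0 // -addeA -EFinM -EFinD.
Qed.

Theorem theorem3p1 (R : realType) (Dataset : Type)
  (neighbor : Dataset -> Dataset -> Prop) (v : Dataset -> R)
  (eps delta Delta : R) (heps : 0 < eps) (hdelta0 : 0 < delta) (hdelta1 : delta < 1)
  (hDelta : 0 < Delta)
  (hsens : forall D D', neighbor D D' -> `|v D - v D'| <= Delta)
  (h : R) (hh : h = delta / (1 + expR eps))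
  (qx : R) (hqx : laplace_cdf (Delta / eps) qx = h%:E)
  (tau : R) (htau : tau = `|qx|) :
  is_DP neighbor (pos_laplace_prob v (Delta / eps) tau) eps delta.
Proof.
set b := Delta / eps; have b_gt0 : 0 < b by exact: divr_gt0.
have tail_le : (laplace_cdf b (- tau) <= h%:E)%E.
  by rewrite -hqx le_laplace_cdf // htau lerNl -normrN ler_norm.
have delta_split : delta = expR eps * h + h.
  by rewrite hh; field; rewrite lt0r_neq0 // addr_gt0 ?expR_gt0.
move=> D D' nDD' S mS.
have one_sided E E' : `|v E' - v E| <= Delta ->
    (pos_laplace_prob v b tau E S <=
     (expR eps)%:E * pos_laplace_prob v b tau E' S + delta%:E)%E.
  move=> dE; rewrite delta_split.
  apply: (privacy_budget_le
    (laplace_max_shift_prob_le b b_gt0 tau (v E) (v E') S mS)).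
  - by apply: max_shift_prob_ge0; exact: laplace_pdf_ge0.
  - by apply: lower_tail_ge0; exact: laplace_pdf_ge0.
  - exact: tail_le.
  - by rewrite ler_pdivrMr // mulrC divfK ?gt_eqF.
by split; apply: one_sided; [rewrite distrC|]; exact: hsens.
Qed.
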